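(* Let $\mathcal{A}$ be the greedy algorithm. Then for every $\ell\in[n]$, $$\mathbb{E}[v(\mathcal{A}(U^{\le\ell}))]\ \ge\ \alpha_\ell\,\frac{\ell}{n}\,v(\mathrm{OPT}),\qquad \alpha_\ell=1-\frac{\ell}{en}-\frac{1}{ek}.$$
   Context: Let $U$ be a finite ground set of $n$ items and $k\ge1$ an integer. Let $v\colon 2^U\to\mathbb{R}_{\ge0}$ be monotone and submodular, and $\mathrm{OPT}\in\arg\max\{v(S): S\subseteq U, |S|\le k\}$. The items arrive one per round in a uniformly random order; $U^{\le \ell}$ denotes the set of items arriving in rounds $1,\dots,\ell$. The greedy algorithm, given $L\subseteq U$, starts from $\emptyset$ and repeatedly adds an item of $L$ with maximum marginal increase $v(S\cup\{x\})-v(S)$ (ties broken by a fixed rule depending only on the items) until $\min(k,|L|)$ items are chosen; $\mathcal{A}(L)$ denotes its output. *)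

From mathcomp Require Import all_boot all_fingroup.
From Stdlib Require Import Reals.
Set Implicit Arguments. Unset Strict Implicit. Unset Printing Implicit Defensive.

Definition nonneg_fun n (v : {set 'I_n} -> R) : Prop :=
  forall S, (0 <= v S)%R.

Definition monotone_fun n (v : {set 'I_n} -> R) : Prop :=
  forall A B : {set 'I_n}, A \subset B -> (v A <= v B)%R.

Definition submodular_fun n (v : {set 'I_n} -> R) : Prop :=
  forall A B : {set 'I_n}, (v (A :|: B) + v (A :&: B) <= v A + v B)%R.

Definition marginal n (v : {set 'I_n} -> R) (S : {set 'I_n}) (x : 'I_n) : R :=
  (v (x |: S) - v S)%R.

Definition better n (v : {set 'I_n} -> R) (rk : 'I_n -> nat) (S : {set 'I_n})
  (best y : 'I_n) : 'I_n :=
  if Rlt_dec (marginal v S best) (marginal v S y) then y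
  else if Req_EM_T (marginal v S best) (marginal v S y) then
         (if (rk y < rk best)%N then y else best)
       else best.

Definition greedy_pick n (v : {set 'I_n} -> R) (rk : 'I_n -> nat)
  (L S : {set 'I_n}) : option 'I_n :=
  match enum (L :\: S) with
  | [::] => None
  | x :: s => Some (foldl (better v rk S) x s)
  end.

Definition greedy_step n (v : {set 'I_n} -> R) (rk : 'I_n -> nat)
  (L S : {set 'I_n}) : {set 'I_n} :=
  match greedy_pick v rk L S with
  | None => S
  | Some x => x |: S
  end.

Definition greedy n (v : {set 'I_n} -> R) (rk : 'I_n -> nat) (k : nat)
  (L : {set 'I_n}) : {set 'I_n} :=
  iter (minn k #|L|) (greedy_step v rk L) set0.

(* Random arrival order: a uniformly random permutation pi; the item arriving
   in round i+1 is pi i.  U^{<= l} = items arriving in rounds 1..l. *)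
Definition prefix_set n (pi : {perm 'I_n}) (l : nat) : {set 'I_n} :=
  [set pi i | i : 'I_n & (i < l)%N].

Definition expect_perm n (f : {perm 'I_n} -> R) : R :=
  (\big[Rplus/0%R]_(pi : {perm 'I_n}) f pi / INR #|{perm 'I_n}|)%R.

(* Let L be the set of the first l arrivals and T = OPT ∩ L, of size t <= k.
   The classical greedy analysis against the feasible set T gives
   v(A(L)) >= (1 - (1 - 1/t)^k) v(T) >= (1 - t/(ek)) v(T).  Ordering OPT as
   x_1, ..., x_m and telescoping, submodularity gives
   v(T) >= v(∅) + Σ_{x_j ∈ L} Δ_j, where Δ_j >= 0 is the marginal value of x_j
   over {x_{j+1}, ..., x_m}, and Σ_j Δ_j = v(OPT) - v(∅).  It therefore suffices
   that E[(1 - t/(ek)) [x ∈ L]] >= α_l l/n for every x ∈ OPT, which follows from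
   Pr[x ∈ L] = l/n and Pr[x, y ∈ L] <= (l/n)^2 for y ≠ x. *)

From HB Require Import structures.
From mathcomp Require Import all_boot all_fingroup zify.
From Stdlib Require Import Reals Lra.
Set Implicit Arguments. Unset Strict Implicit. Unset Printing Implicit Defensive.

Lemma Rplus_associative : associative Rplus.
Proof. by move=> x y z; rewrite Rplus_assoc. Qed.

HB.instance Definition _ :=
  Monoid.isComLaw.Build R 0%R Rplus Rplus_associative Rplus_comm Rplus_0_l.

(* Set expressions are elaborated with or without the [reverse_coercion] marker
   on their type depending on how the element type is inferred; [lra] compares
   atoms syntactically, so the marker is erased first. *)
Ltac lra_sets := unfold reverse_coercion in *; lra.

Section RealSums.
Variable I : Type.
Implicit Types (r : seq I) (P : pred I) (F G : I -> R).

Lemma Rsum_le r P F G : (forall i, P i -> F i <= G i)%R ->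
  (\big[Rplus/0]_(i <- r | P i) F i <= \big[Rplus/0]_(i <- r | P i) G i)%R.
Proof.
by move=> leFG; apply: (big_ind2 (fun x y => x <= y)%R) => //; [lra | move=> *; lra].
Qed.

Lemma Rsum_mull r P c F :
  (\big[Rplus/0]_(i <- r | P i) (c * F i) = c * \big[Rplus/0]_(i <- r | P i) F i)%R.
Proof.
apply: (big_ind2 (fun y x => y = c * x)%R) => [|x1 x2 y1 y2 -> ->|//]; lra.
Qed.

Lemma Rsum_INR r P (f : I -> nat) :
  (\big[Rplus/0]_(i <- r | P i) INR (f i) = INR (\sum_(i <- r | P i) f i))%R.
Proof. by rewrite (big_morph INR plus_INR (erefl (INR 0))). Qed.

Lemma Rsum_const_seq r c : (\big[Rplus/0]_(i <- r) c = INR (size r) * c)%R.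
Proof.
rewrite -sum1_size -Rsum_INR -[RHS]Rmult_comm -Rsum_mull.
by apply: eq_bigr => _ _; rewrite /=; lra.
Qed.
End RealSums.

Lemma Rsum_const (I : finType) c : (\big[Rplus/0]_(i : I) c = INR #|I| * c)%R.
Proof. by rewrite Rsum_const_seq cardT enumT. Qed.

Lemma exp_pow x m : (exp x ^ m = exp (INR m * x))%R.
Proof.
elim: m => [|m IHm]; first by rewrite /= Rmult_0_l exp_0.
by rewrite [LHS]/= IHm -exp_plus S_INR; congr exp; lra.
Qed.

(* [(1 - 1/t)^k <= exp (-k/t)] and [e * x <= exp x] at [x = k/t]. *)
Lemma pow_one_sub_inv_le t k : (1 <= t)%R -> (0 < INR k)%R ->
  ((1 - 1 / t) ^ k <= t / (exp 1 * INR k))%R.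
Proof.
move=> t_ge1 k_gt0.
have inv_t_le1 : (0 < 1 / t <= 1)%R.
  split; first by apply: Rdiv_lt_0_compat; lra.
  by apply: (Rmult_le_reg_r t); [lra | field_simplify; lra].
set x := (INR k / t)%R.
have x_gt0 : (0 < x)%R by apply: Rdiv_lt_0_compat; lra.
apply: (@Rle_trans _ (exp (- (1 / t)) ^ k)).
  by apply: pow_incr; split; [lra | have := exp_ineq1_le (- (1 / t)); lra].
have -> : (exp (- (1 / t)) ^ k = / exp x)%R.
  by rewrite exp_pow -exp_Ropp; congr exp; rewrite /x; field; lra.
have ex_le : (exp 1 * x <= exp x)%R.
  have -> : exp x = (exp 1 * exp (x - 1))%R by rewrite -exp_plus; congr exp; lra.
  by apply: Rmult_le_compat_l; [have := exp_pos 1 | have := exp_ineq1_le (x - 1)]; lra.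
have -> : (t / (exp 1 * INR k) = / (exp 1 * x))%R.
  by rewrite /x; field; split; [lra | have := exp_pos 1; lra].
by apply: Rinv_le_contravar => //; have := exp_pos 1; nra.
Qed.

Section Greedy.
Variables (n : nat) (v : {set 'I_n} -> R) (rk : 'I_n -> nat).
Hypotheses (v_ge0 : nonneg_fun v) (v_mono : monotone_fun v) (v_submod : submodular_fun v).
Implicit Types (L S T : {set 'I_n}) (x y : 'I_n).

Lemma betterP S b y : let z := better v rk S b y in
  [/\ z \in [:: b; y], (marginal v S b <= marginal v S z)%R
    & (marginal v S y <= marginal v S z)%R].
Proof.
rewrite /better; case: Rlt_dec => [lt_by|ge_by] /=.
  by split; rewrite ?inE ?eqxx ?orbT //; lra.
case: Req_EM_T => [eq_by|ne_by] /=; last by split; rewrite ?inE ?eqxx //; lra.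
by case: ifP => _; split; rewrite ?inE ?eqxx ?orbT //; lra.
Qed.

Lemma foldl_betterP S s b : let z := foldl (better v rk S) b s in
  z \in b :: s /\ forall y, y \in b :: s -> (marginal v S y <= marginal v S z)%R.
Proof.
elim: s b => [|x s IHs] b /=.
  by split=> [|y]; rewrite ?mem_head // inE => /eqP ->; lra.
have [zbx le_bz le_xz] := betterP S b x.
have [z_in z_max] := IHs (better v rk S b x).
split.
  move: z_in; rewrite !inE => /orP [/eqP ->|->]; last by rewrite !orbT.
  by move: zbx; rewrite !inE => /orP [->|/eqP ->]; rewrite ?eqxx ?orbT.
move=> y; rewrite !inE => /orP [/eqP ->|/orP [/eqP ->|y_s]].
- exact: Rle_trans le_bz (z_max _ (mem_head _ _)).
- exact: Rle_trans le_xz (z_max _ (mem_head _ _)).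
- by apply: z_max; rewrite inE y_s orbT.
Qed.

Lemma greedy_pickP L S :
  if greedy_pick v rk L S is Some x then
    x \in L :\: S /\ forall y, y \in L :\: S -> (marginal v S y <= marginal v S x)%R
  else L \subset S.
Proof.
rewrite /greedy_pick -setD_eq0; case E: (enum (L :\: S)) => [|x0 s].
  by rewrite -[L :\: S]set_enum E; apply/eqP/setP => y; rewrite !inE.
have [z_in z_max] := foldl_betterP S s x0.
by split=> [|y]; rewrite -mem_enum E // => /z_max.
Qed.

Lemma marginal_ge0 S x : (0 <= marginal v S x)%R.
Proof. by rewrite /marginal; have := v_mono (subsetUr [set x] S); lra. Qed.

Lemma marginal_in S x : x \in S -> marginal v S x = 0%R.
Proof. by move=> xS; rewrite /marginal (setUidPr _) ?sub1set //; lra. Qed.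

Lemma submod_le_marginal_sum S (s : seq 'I_n) :
  (v (S :|: [set y in s]) <= v S + \big[Rplus/0]_(y <- s) marginal v S y)%R.
Proof.
elim: s => [|x s IHs].
  by rewrite big_nil (_ : [set y in [::]] = set0) ?setU0; [lra | apply/setP => y; rewrite !inE].
have -> : S :|: [set y in x :: s] = (x |: S) :|: (S :|: [set y in s]).
  by apply/setP => y; rewrite !inE; case: (y == x); case: (y \in S).
have le_S_cap : (v S <= v ((x |: S) :&: (S :|: [set y in s])))%R.
  by apply: v_mono; rewrite subsetI subsetUr subsetUl.
have := v_submod (x |: S) (S :|: [set y in s]).
move=> submod_ineq; rewrite big_cons /marginal in IHs *; lra_sets.
Qed.

Lemma submod_gap_le S T c : (forall y, y \in T -> marginal v S y <= c)%R ->
  (v T - v S <= INR #|T| * c)%R.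
Proof.
move=> marg_le.
have le_sum : (v (S :|: T) <= v S + INR #|T| * c)%R.
  have := submod_le_marginal_sum S (enum T); rewrite set_enum => le_marg.
  apply: Rle_trans le_marg _; apply: Rplus_le_compat_l; rewrite cardE -Rsum_const_seq.
  rewrite big_seq_cond [X in (_ <= X)%R]big_seq_cond.
  by apply: Rsum_le => y /andP [yT _]; apply: marg_le; rewrite -mem_enum.
have := v_mono (subsetUr S T); lra.
Qed.

Lemma greedy_step_gain L S T : T \subset L -> (0 < #|T|)%N ->
  (v S + (v T - v S) / INR #|T| <= v (greedy_step v rk L S))%R.
Proof.
move=> sTL T_gt0.
have T_ge1 : (1 <= INR #|T|)%R by apply: (le_INR 1); apply/leP.
suff gap_le : (v T - v S <= INR #|T| * (v (greedy_step v rk L S) - v S))%R.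
  have : ((v T - v S) / INR #|T| <= v (greedy_step v rk L S) - v S)%R.
    by apply: (Rmult_le_reg_r (INR #|T|)); [lra | field_simplify; lra].
  lra.
rewrite /greedy_step; have := greedy_pickP L S; case: greedy_pick => [x [x_in x_max]|sLS].
  apply: submod_gap_le => y yT; case: (boolP (y \in S)) => [yS|yNS].
    by rewrite marginal_in //; apply: marginal_ge0.
  by apply: x_max; rewrite inE yNS (subsetP sTL).
by have := v_mono (subset_trans sTL sLS); rewrite Rminus_diag Rmult_0_r; lra.
Qed.

Lemma greedy_iter_ge L T i : T \subset L -> (0 < #|T|)%N ->
  ((1 - (1 - 1 / INR #|T|) ^ i) * v T <= v (iter i (greedy_step v rk L) set0))%R.
Proof.
move=> sTL T_gt0; have T_ge1 : (1 <= INR #|T|)%R by apply: (le_INR 1); apply/leP.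
set u := (1 / INR #|T|)%R.
have u_01 : (0 < u <= 1)%R.
  split; first by apply: Rdiv_lt_0_compat; lra.
  by apply: (Rmult_le_reg_r (INR #|T|)); [lra | rewrite /u; field_simplify; lra].
have vT_ge0 := v_ge0 T.
elim: i => [|i IHi]; first by rewrite /= Rminus_diag Rmult_0_l.
rewrite [iter _.+1 _ _]/=; set S := iter i _ set0 in IHi *.
have gain := greedy_step_gain S sTL T_gt0.
rewrite (_ : (v T - v S) / INR #|T| = (v T - v S) * u)%R in gain; last by rewrite /u; field; lra.
have c_ge0 := pow_le (1 - u) i ltac:(lra).
set c := ((1 - u) ^ i)%R in IHi c_ge0 *.
have -> : ((1 - u) ^ i.+1 = (1 - u) * c)%R by [].
have : (0 <= (1 - u) * (v S - (1 - c) * v T))%R by apply: Rmult_le_pos; lra.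
by nra.
Qed.

Lemma greedy_iter_card L i : (i <= #|L|)%N ->
  iter i (greedy_step v rk L) set0 \subset L /\ #|iter i (greedy_step v rk L) set0| = i.
Proof.
elim: i => [|i IHi] lt_iL; first by rewrite sub0set cards0.
have [sSL cardS] := IHi (ltnW lt_iL).
rewrite [iter _.+1 _ _]/=; set S := iter i _ set0 in sSL cardS *.
rewrite /greedy_step; have := greedy_pickP L S; case: greedy_pick => [x [+ _]|sLS].
  by rewrite inE => /andP [xNS xL]; rewrite subUset sub1set xL sSL cardsU1 xNS cardS.
by have := subset_leq_card sLS; rewrite cardS leqNgt lt_iL.
Qed.

Lemma greedy_ge k L T : (0 < k)%N -> T \subset L -> (#|T| <= k)%N ->
  ((1 - INR #|T| / (exp 1 * INR k)) * v T <= v (greedy v rk k L))%R.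
Proof.
move=> k_gt0 sTL T_le_k.
have k_pos : (0 < INR k)%R by apply: (lt_INR 0); apply/ltP.
have ratio_ge0 : (0 <= INR #|T| / (exp 1 * INR k))%R.
  by apply: Rmult_le_pos; [apply: pos_INR | have := exp_pos 1; left; apply: Rinv_0_lt_compat; nra].
have vT_ge0 := v_ge0 T.
rewrite /greedy; case: (leqP k #|L|) => [le_kL|lt_Lk].
  case: (posnP #|T|) => [T0|T_gt0].
    rewrite T0 /= Rdiv_0_l Rminus_0_r Rmult_1_l; apply: v_mono.
    by rewrite (_ : T = set0) ?sub0set //; apply/eqP; rewrite -cards_eq0 T0.
  apply: Rle_trans (greedy_iter_ge k sTL T_gt0); apply: Rmult_le_compat_r => //.
  have T_ge1 : (1 <= INR #|T|)%R by apply: (le_INR 1); apply/leP.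
  by have := pow_one_sub_inv_le T_ge1 k_pos; lra.
have [sIL cardI] := greedy_iter_card (leqnn #|L|).
have -> : iter #|L| (greedy_step v rk L) set0 = L by apply/eqP; rewrite eqEcard sIL cardI leqnn.
by have := v_mono sTL; nra.
Qed.
End Greedy.

Section PermCounts.
Variable n : nat.
Local Notation P := {perm 'I_n}.
Implicit Types (x y i : 'I_n) (r : P).

Lemma sum_ord_ltn m : (m <= n)%N -> \sum_(i : 'I_n) (i < m : nat) = m.
Proof.
move=> le_mn; rewrite -big_mkcond /= (big_ord_narrow le_mn) /=.
by rewrite sum_nat_const card_ord muln1.
Qed.

Lemma sum_perm_eq_image x i j :
  \sum_(r : P) (r x == i : nat) = \sum_(r : P) (r x == j : nat).
Proof.
rewrite (reindex_inj (mulIg (tperm i j))) /=; apply: eq_bigr => r _.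
by rewrite permM -[X in _ == X](tpermR i j) (inj_eq (@perm_inj _ _)).
Qed.

Lemma sum_perm_image_ltn x m : (m <= n)%N ->
  \sum_(r : P) (r x < m : nat) = m * \sum_(r : P) (r x == x : nat).
Proof.
move=> le_mn.
rewrite (eq_bigr (fun r => \sum_(i : 'I_n | i < m) (r x == i : nat))) => [|r _].
  rewrite exchange_big /= (eq_bigr _ (fun i _ => sum_perm_eq_image x i x)).
  by rewrite (big_ord_narrow le_mn) sum_nat_const card_ord.
case: ltnP => [rx_lt|rx_ge].
  rewrite (bigD1 (r x)) //= eqxx big1 // => i /andP [_ i_ne].
  by rewrite eq_sym (negbTE i_ne).
by rewrite big1 // => i i_lt; case: eqP => // rx_i; rewrite -rx_i ltnNge rx_ge in i_lt.
Qed.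

Lemma sum_perm_ltn r m : (m <= n)%N -> \sum_(z : 'I_n) (r z < m : nat) = m.
Proof.
move=> le_mn; rewrite (reindex_inj (@perm_inj _ r^-1)) /= -[RHS](sum_ord_ltn le_mn).
by apply: eq_bigr => i _; rewrite permKV.
Qed.

Variable l : nat.
Hypothesis l_le_n : (l <= n)%N.

Lemma sum_perm_prefix x : n * \sum_(r : P) (r x < l : nat) = l * #|P|.
Proof.
have sumT : \sum_(r : P) (r x < n : nat) = #|P|.
  by rewrite -sum1_card; apply: eq_bigr => r _; rewrite ltn_ord.
by rewrite sum_perm_image_ltn // -sumT sum_perm_image_ltn // mulnCA.
Qed.

Lemma sum_perm_prefix_pair_eq x y y' : y != x -> y' != x ->
  \sum_(r : P) ((r x < l) * (r y < l)) = \sum_(r : P) ((r x < l) * (r y' < l)).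
Proof.
move=> y_ne y'_ne; rewrite (reindex_inj (mulgI (tperm y y'))) /=.
by apply: eq_bigr => r _; rewrite !permM tpermL tpermD // eq_sym.
Qed.

Lemma sum_perm_prefix_pair x y : y != x ->
  n.-1 * \sum_(r : P) ((r x < l) * (r y < l)) = l.-1 * \sum_(r : P) (r x < l : nat).
Proof.
move=> y_ne.
have -> : n.-1 * \sum_(r : P) ((r x < l) * (r y < l)) =
    \sum_(z | z != x) \sum_(r : P) ((r x < l) * (r z < l)).
  rewrite (eq_bigr _ (fun z z_ne => sum_perm_prefix_pair_eq z_ne y_ne)).
  by rewrite sum_nat_const cardC1 card_ord mulnC.
rewrite exchange_big mulnC big_distrl /=; apply: eq_bigr => r _.
rewrite -big_distrr /=; case rx_lt: (r x < l); rewrite ?mul0n ?mul1n //.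
by have := sum_perm_ltn r l_le_n; rewrite (bigD1 x) //= rx_lt add1n => /(congr1 predn).
Qed.

Lemma sum_perm_prefix_pair_le x y : y != x ->
  n * \sum_(r : P) ((r x < l) * (r y < l)) <= l * \sum_(r : P) (r x < l : nat).
Proof.
move=> y_ne; have n_gt1 : (1 < n)%N.
  by rewrite -[n]card_ord (cardD1 x) (cardD1 y) !inE y_ne.
have := sum_perm_prefix_pair y_ne.
set M := \sum_(r : P) _; set N := \sum_(r : P) _ => pair_eq.
have : n.-1 * (n * M) <= n.-1 * (l * N) by rewrite mulnCA pair_eq; move: l_le_n n_gt1; nia.
by rewrite leq_pmul2l //; lia.
Qed.
End PermCounts.

Section Chain.
Variables (n : nat) (v : {set 'I_n} -> R).
Hypotheses (v_mono : monotone_fun v) (v_submod : submodular_fun v).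

Fixpoint chain_lower (s : seq 'I_n) (X : {set 'I_n}) : R :=
  if s is x :: s' then
    (chain_lower s' X + (if x \in X then marginal v [set y in s'] x else 0))%R
  else v set0.

Lemma chain_lower_le s X : (chain_lower s X <= v ([set y in s] :&: X))%R.
Proof.
elim: s => [|x s IHs] /=; first by apply: v_mono; rewrite sub0set.
have -> : [set y in x :: s] = x |: [set y in s] by apply/setP => y; rewrite !inE.
set B := [set y in s] in IHs *.
case: (boolP (x \in X)) => [xX|xNX]; last first.
  suff -> : (x |: B) :&: X = B :&: X by rewrite /= Rplus_0_r.
  by apply/setP => y; rewrite !inE; case: eqP => [->|_] //=; rewrite (negbTE xNX) andbF.
have -> : (x |: B) :&: X = x |: (B :&: X).
  by apply/setP => y; rewrite !inE; case: eqP => [->|_] //=; rewrite xX andbT.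
case: (boolP (x \in B)) => [xB|xNB].
  rewrite /= /marginal (setUidPr _) ?sub1set //.
  by have := v_mono (subsetUr [set x] (B :&: X)); lra.
have := v_submod (x |: (B :&: X)) B.
have -> : (x |: (B :&: X)) :|: B = x |: B.
  by apply/setP => y; rewrite !inE; case: (y == x); case: (y \in s); case: (y \in X).
have -> : (x |: (B :&: X)) :&: B = B :&: X.
  apply/setP => y; rewrite !inE; case: eqP => [->|_] /=.
    by move: xNB; rewrite inE => /negbTE ->.
  by case: (y \in s); case: (y \in X).
rewrite /= /marginal; lra.
Qed.
End Chain.

Definition arrived_by n (r : {perm 'I_n}) l : {set 'I_n} := [set y | r y < l].

Lemma prefix_setE n (pi : {perm 'I_n}) l : prefix_set pi l = arrived_by pi^-1%g l.
Proof.
apply/setP => y; rewrite inE; apply/imsetP/idP => [[i]|lt_l].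
  by rewrite inE => lt_il ->; rewrite permK.
by exists (pi^-1%g y); rewrite ?inE ?permKV.
Qed.

Section RandomPrefix.
Variables (n k l : nat) (OPT : {set 'I_n}).
Hypotheses (k_gt0 : (0 < k)%N) (OPT_le_k : (#|OPT| <= k)%N)
  (l_gt0 : (0 < l)%N) (l_le_n : (l <= n)%N).
Local Notation P := {perm 'I_n}.
Implicit Types (r : P) (x : 'I_n).

Definition opt_arrived r := #|OPT :&: arrived_by r l|.

Definition greedy_factor r : R := (1 - INR (opt_arrived r) / (exp 1 * INR k))%R.

Definition expected_ratio : R :=
  ((1 - INR l / (exp 1 * INR n) - 1 / (exp 1 * INR k)) * (INR l / INR n))%R.

Lemma opt_arrived_le r : (opt_arrived r <= k)%N.
Proof. exact: leq_trans (subset_leq_card (subsetIl _ _)) OPT_le_k. Qed.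

Lemma opt_arrived_sum r : opt_arrived r = \sum_(y in OPT) (r y < l : nat).
Proof.
rewrite /opt_arrived -sum1_card (eq_bigl (fun y => (y \in OPT) && (r y < l))) => [|y].
  by rewrite big_mkcondr; apply: eq_bigr => y _; case: (r y < l).
by rewrite !inE.
Qed.

Let exp1_gt2 : (2 < exp 1)%R.
Proof. by have := exp_ineq1 1 ltac:(lra); lra. Qed.

Let k_ge1 : (1 <= INR k)%R.
Proof. by apply: (le_INR 1); apply/leP. Qed.

Let l_ge1 : (1 <= INR l)%R.
Proof. by apply: (le_INR 1); apply/leP. Qed.

Let l_le_nR : (INR l <= INR n)%R.
Proof. by apply: le_INR; apply/leP. Qed.

Lemma greedy_factor_ge r : (expected_ratio <= greedy_factor r /\ 0 <= greedy_factor r)%R.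
Proof.
have t_le_k : (INR (opt_arrived r) <= INR k)%R by apply: le_INR; apply/leP; apply: opt_arrived_le.
rewrite /greedy_factor /expected_ratio.
set u := (1 / exp 1)%R.
have u_bounds : (0 < u < 1 / 2)%R.
  split; first by apply: Rdiv_lt_0_compat; lra.
  by apply: (Rmult_lt_reg_r (2 * exp 1)); [lra | rewrite /u; field_simplify; lra].
have ratio_le_u : (INR (opt_arrived r) / (exp 1 * INR k) <= u)%R.
  by apply: (Rmult_le_reg_r (exp 1 * INR k)); [nra | rewrite /u; field_simplify; nra].
set p := (INR l / INR n)%R.
have p_bounds : (0 < p <= 1)%R.
  split; first by apply: Rdiv_lt_0_compat; lra.
  by apply: (Rmult_le_reg_r (INR n)); [lra | rewrite /p; field_simplify; lra].
have -> : (INR l / (exp 1 * INR n) = p * u)%R by rewrite /p /u; field; lra.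
have w_ge0 : (0 <= 1 / (exp 1 * INR k))%R by apply: Rlt_le; apply: Rdiv_lt_0_compat; nra.
split; last by lra.
(* [(1 - p u) p <= 1 - u] because [(1 - p) (1 - u (1 + p)) >= 0]. *)
have : (0 <= (1 - p) * (1 - u * (1 + p)))%R by apply: Rmult_le_pos; nra.
by nra.
Qed.

Lemma sum_prefix_opt_arrived_le x : x \in OPT ->
  n * \sum_(r : P) ((r x < l) * opt_arrived r) <= (n + k * l) * \sum_(r : P) (r x < l : nat).
Proof.
move=> xOPT; set N := \sum_(r : P) (r x < l : nat).
have -> : \sum_(r : P) ((r x < l) * opt_arrived r) =
    N + \sum_(y in OPT | y != x) \sum_(r : P) ((r x < l) * (r y < l)).
  rewrite (eq_bigr (fun r => \sum_(y in OPT) ((r x < l) * (r y < l)))) => [|r _]; last first.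
    by rewrite opt_arrived_sum big_distrr.
  rewrite exchange_big /= (bigD1 x) //=; congr (_ + _).
  by apply: eq_bigr => r _; case: (r x < l).
rewrite mulnDr mulnDl leq_add2l big_distrr /=.
apply: (@leq_trans (\sum_(y in OPT | y != x) (l * N))).
  by apply: leq_sum => y /andP [_ y_ne]; apply: sum_perm_prefix_pair_le.
apply: (@leq_trans (\sum_(y in OPT) (l * N))).
  by rewrite [leqRHS](bigD1 x) //= leq_addl.
by rewrite sum_nat_const -mulnA leq_mul2r OPT_le_k orbT.
Qed.

Lemma sum_factor_prefix_ge x : x \in OPT ->
  (INR #|P| * expected_ratio <=
   \big[Rplus/0]_(r : P) (greedy_factor r * (if (r x < l)%nat then 1 else 0)))%R.
Proof.
move=> xOPT.
set N := \sum_(r : P) (r x < l : nat).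
set S := \sum_(r : P) ((r x < l) * opt_arrived r).
have countN : (INR n * INR N = INR l * INR #|P|)%R.
  by rewrite -!mult_INR; congr INR; apply: sum_perm_prefix.
have countS : (INR n * INR S <= (INR n + INR k * INR l) * INR N)%R.
  rewrite -!mult_INR -plus_INR -mult_INR; apply: le_INR; apply/leP.
  exact: sum_prefix_opt_arrived_le.
have eP : (INR #|P| * (INR l / INR n) = INR N)%R.
  by apply: (Rmult_eq_reg_l (INR n)); [rewrite countN; field | ]; lra.
have -> : (\big[Rplus/0]_(r : P) (greedy_factor r * (if (r x < l)%nat then 1 else 0)) =
    INR N + - (1 / (exp 1 * INR k)) * INR S)%R.
  rewrite /N /S -!Rsum_INR -Rsum_mull -big_split /=; apply: eq_bigr => r _.
  by rewrite /greedy_factor; case: (r x < l); rewrite /= ?mul1n ?mul0n /=; field; nra.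
have -> : (INR #|P| * expected_ratio =
    INR N - (INR n + INR k * INR l) * INR N * / (exp 1 * INR k * INR n))%R.
  by rewrite /expected_ratio -eP; field; nra.
have -> : (- (1 / (exp 1 * INR k)) * INR S =
    - (INR n * INR S * / (exp 1 * INR k * INR n)))%R by field; nra.
have c_ge0 : (0 <= / (exp 1 * INR k * INR n))%R.
  by apply: Rlt_le; apply: Rinv_0_lt_compat; apply: Rmult_lt_0_compat; nra.
by have := Rmult_le_compat_r _ _ _ c_ge0 countS; lra.
Qed.

Variable v : {set 'I_n} -> R.
Hypotheses (v_ge0 : nonneg_fun v) (v_mono : monotone_fun v) (v_submod : submodular_fun v).

Lemma greedy_factor_chain_le (rk : 'I_n -> nat) r :
  (greedy_factor r * chain_lower v (enum OPT) (arrived_by r l) <=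
   v (greedy v rk k (arrived_by r l)))%R.
Proof.
have [_ factor_ge0] := greedy_factor_ge r.
have := chain_lower_le v_mono v_submod (enum OPT) (arrived_by r l).
rewrite set_enum => chain_le.
apply: Rle_trans (greedy_ge rk v_ge0 v_mono v_submod k_gt0 (subsetIr OPT _) (opt_arrived_le r)).
exact: Rmult_le_compat_l.
Qed.

Lemma sum_chain_lower_ge s : {subset s <= OPT} ->
  (INR #|P| * expected_ratio * v [set y in s] <=
   \big[Rplus/0]_(r : P) (greedy_factor r * chain_lower v s (arrived_by r l)))%R.
Proof.
elim: s => [|x s IHs] /= sOPT.
  rewrite (_ : [set y in [::]] = set0); last by apply/setP => y; rewrite !inE.
  rewrite Rmult_assoc -Rsum_const.
  apply: Rsum_le => r _; have [ratio_le _] := greedy_factor_ge r.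
  by apply: Rmult_le_compat_r.
have {}IHs : (_ <= _)%R := IHs (fun y ys => sOPT y (mem_behead (s := x :: s) ys)).
have sum_x := sum_factor_prefix_ge (sOPT x (mem_head x s)).
set B := [set y in s] in IHs *.
have -> : [set y in x :: s] = x |: B by apply/setP => y; rewrite !inE.
set D := marginal v B x.
rewrite (eq_bigr (fun r => greedy_factor r * chain_lower v s (arrived_by r l) +
    D * (greedy_factor r * (if (r x < l)%nat then 1 else 0)))%R) => [|r _]; last first.
  by rewrite /arrived_by inE; case: (r x < l)%nat; ring.
rewrite big_split Rsum_mull /=.
set Sx := \big[Rplus/0%R]_(r : P) _ in sum_x *.
set Ss := \big[Rplus/0%R]_(r : P) _ in IHs *.
have gain_x := Rmult_le_compat_l _ _ _ (marginal_ge0 v_mono B x) sum_x.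
by rewrite /D /marginal in gain_x *; lra_sets.
Qed.
End RandomPrefix.

Theorem mainTheorem5 (n k : nat) (v : {set 'I_n} -> R) (rk : 'I_n -> nat)
  (OPT : {set 'I_n}) (l : nat) :
  (1 <= k)%N ->
  nonneg_fun v -> monotone_fun v -> submodular_fun v ->
  injective rk ->
  (#|OPT| <= k)%N ->
  (forall S : {set 'I_n}, (#|S| <= k)%N -> (v S <= v OPT)%R) ->
  (1 <= l <= n)%N ->
  (expect_perm (fun pi => v (greedy v rk k (prefix_set pi l)))
   >= (1 - INR l / (exp 1 * INR n) - 1 / (exp 1 * INR k))
      * (INR l / INR n) * v OPT)%R.
Proof.
move=> k_gt0 v_ge0 v_mono v_submod _ OPT_le_k _ /andP [l_gt0 l_le_n].
rewrite /expect_perm (reindex_inj invg_inj) /=.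
rewrite (eq_bigr (fun r => v (greedy v rk k (arrived_by r l)))) => [|r _]; last first.
  by rewrite prefix_setE invgK.
have P_gt0 : (0 < INR #|{perm 'I_n}|)%R.
  by apply: (lt_INR 0); apply/ltP; apply/card_gt0P; exists 1%g.
have enum_sub : {subset enum OPT <= OPT} by move=> y; rewrite mem_enum.
have := sum_chain_lower_ge k_gt0 OPT_le_k l_gt0 l_le_n v_ge0 v_mono enum_sub.
rewrite set_enum => chain_ge.
apply/Rle_ge/(Rmult_le_reg_r _ _ _ P_gt0).
have divK : forall x, (x / INR #|{perm 'I_n}| * INR #|{perm 'I_n}| = x)%R.
  by move=> x; field; lra.
rewrite divK.
apply: (Rle_trans _ _ _ _ (Rle_trans _ _ _ chain_ge _)).
  by right; rewrite /expected_ratio; ring.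
by apply: Rsum_le => r _; apply: greedy_factor_chain_le.
Qed.
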